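(* Let $\mathfrak a=\{(a_1,\dots,a_{n+1})\in\mathbb R^{n+1}:a_1+\dots+a_{n+1}=0\}$ be the maximal abelian subspace of $\mathfrak p$ for $\mathrm{SL}_{n+1}\mathbb R$ (diagonal trace-zero matrices), with positive roots $\Lambda^+=\{a_j^*-a_l^*: j<l\}$. Let $\{v_1,\dots,v_n\}$ be any basis of $\mathfrak a$, and let $A$ be the $n\times|\Lambda^+|$ matrix with rows indexed by $i$ and columns by $\alpha\in\Lambda^+$, whose $(i,\alpha)$ entry is $1$ if $\alpha(v_i)\ne0$ and $0$ otherwise. Then each row of $A$ has at most one entry equal to $1$ in a column whose other entries are all $0$; that is, for each $i$ there is at most one $\alpha\in\Lambda^+$ with $\alpha(v_i)\ne0$ and $\alpha(v_k)=0$ for all $k\ne i$. *)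

From HB Require Import structures.
From mathcomp Require Import all_boot all_order all_algebra.
From mathcomp Require Import reals.
Set Implicit Arguments. Unset Strict Implicit. Unset Printing Implicit Defensive.
Import Order.TTheory GRing.Theory Num.Theory.
Local Open Scope ring_scope.

(* Elements of R^(n+1) are row vectors 'rV[R]_(n.+1); coordinates a_1..a_(n+1)
   are indexed by j : 'I_(n.+1). *)

Definition in_a (R : realType) (n : nat) (x : 'rV[R]_(n.+1)) : Prop :=
  \sum_(j < n.+1) x 0 j = 0.

Definition basis_of_a (R : realType) (n : nat) (V : 'M[R]_(n, n.+1)) : Prop :=
  [/\ forall i : 'I_n, in_a (row i V),
      row_free V &
      forall x : 'rV[R]_(n.+1), in_a x -> (x <= V)%MS].

(* Positive roots of sl_(n+1): alpha_(j,l) = a_j^* - a_l^* with j < l. *)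
Definition pos_root (n : nat) (p : 'I_(n.+1) * 'I_(n.+1)) : bool :=
  (p.1 < p.2)%N.

Definition root_eval (R : realType) (n : nat) (p : 'I_(n.+1) * 'I_(n.+1))
  (x : 'rV[R]_(n.+1)) : R := x 0 p.1 - x 0 p.2.

Definition Aentry (R : realType) (n : nat) (V : 'M[R]_(n, n.+1)) (i : 'I_n)
  (p : 'I_(n.+1) * 'I_(n.+1)) : bool := root_eval p (row i V) != 0.

From HB Require Import structures.
From mathcomp Require Import all_boot all_order all_algebra.
From mathcomp Require Import reals.
Import Order.TTheory GRing.Theory Num.Theory.
Local Open Scope ring_scope.

(* If the root alpha vanishes on every basis vector but v_i, then writing
   x = sum_k c_k v_k gives alpha(x) = c_i alpha(v_i); so on a every such root
   has the same kernel {c_i = 0}.  But the kernel of a_j^* - a_l^* on a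
   determines {j, l}: the trace-zero vector (n+1) e_m - (1, ..., 1) is killed
   exactly by the roots not involving m. *)

Section RootKernels.

Variables (R : realType) (n : nat).
Implicit Types (p q : 'I_n.+1 * 'I_n.+1) (x : 'rV[R]_n.+1).

Lemma root_eval_mulmx (V : 'M[R]_(n, n.+1)) (c : 'rV[R]_n) p :
  root_eval p (c *m V) = \sum_k c 0 k * root_eval p (row k V).
Proof.
by rewrite /root_eval !mxE -sumrB; apply: eq_bigr => k _; rewrite !mxE mulrBr.
Qed.

Lemma root_eval_mulmx_private {V : 'M[R]_(n, n.+1)} (c : 'rV[R]_n) {i p} :
  (forall k : 'I_n, k != i -> ~~ Aentry V k p) ->
  root_eval p (c *m V) = c 0 i * root_eval p (row i V).
Proof.
move=> privp; rewrite root_eval_mulmx (bigD1 i) //= big1 ?addr0 // => k /privp.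
by rewrite /Aentry negbK => /eqP ->; rewrite mulr0.
Qed.

Lemma private_roots_kernel_sub (V : 'M[R]_(n, n.+1)) i p q :
  (forall x, in_a x -> (x <= V)%MS) ->
  Aentry V i p -> (forall k : 'I_n, k != i -> ~~ Aentry V k p) ->
  (forall k : 'I_n, k != i -> ~~ Aentry V k q) ->
  forall x, in_a x -> root_eval p x = 0 -> root_eval q x = 0.
Proof.
move=> spanV Aip privp privq x /spanV /submxP [c ->].
rewrite (root_eval_mulmx_private c privp) (root_eval_mulmx_private c privq) => /eqP.
by rewrite mulf_eq0 (negbTE Aip) orbF => /eqP ->; rewrite mul0r.
Qed.

Definition spike (m : 'I_n.+1) : 'rV[R]_n.+1 :=
  \row_j ((j == m)%:R * n.+1%:R - 1).

Lemma in_a_spike m : in_a (spike m).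
Proof.
rewrite /in_a; under eq_bigr do rewrite mxE.
rewrite sumrB sumr_const card_ord -mulr_suml (bigD1 m) //= eqxx big1 ?addr0.
  by rewrite mul1r subrr.
by move=> j /negbTE ->.
Qed.

Lemma root_eval_spike p m :
  root_eval p (spike m) = ((p.1 == m)%:R - (p.2 == m)%:R) * n.+1%:R.
Proof. by rewrite /root_eval !mxE opprB addrA subrK mulrBl. Qed.

Lemma root_kernel_sub_endpoints p q :
  q.1 != q.2 ->
  (forall x, in_a x -> root_eval p x = 0 -> root_eval q x = 0) ->
  {subset [:: q.1; q.2] <= [:: p.1; p.2]}.
Proof.
move=> q12 kerpq m mq; apply/negPn/negP; rewrite !inE negb_or => /andP[mp1 mp2].
have /(kerpq _ (in_a_spike m)) : root_eval p (spike m) = 0.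
  by rewrite root_eval_spike eq_sym (negbTE mp1) eq_sym (negbTE mp2) subrr mul0r.
rewrite root_eval_spike => /eqP.
rewrite mulf_eq0 pnatr_eq0 orbF subr_eq0 eqr_nat.
by move: mq; rewrite !inE => /orP[] /eqP ->; rewrite eqxx ?[q.2 == _]eq_sym (negbTE q12).
Qed.

End RootKernels.

Lemma pos_root_endpoints_sub n (p q : 'I_n.+1 * 'I_n.+1) :
  pos_root p -> pos_root q -> {subset [:: q.1; q.2] <= [:: p.1; p.2]} -> p = q.
Proof.
case: p q => [a b] [c d]; rewrite /pos_root /= => ab cd sub.
have := sub c; have := sub d; rewrite !inE !eqxx orbT => /(_ isT) + /(_ isT).
case/orP => /eqP dE; case/orP => /eqP cE; subst; rewrite ?ltnn // in ab cd *.
by move: (ltn_trans ab cd); rewrite ltnn.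
Qed.

Theorem lemma11p3 (R : realType) (n : nat) (V : 'M[R]_(n, n.+1)) :
  basis_of_a V ->
  forall (i : 'I_n) (p q : 'I_(n.+1) * 'I_(n.+1)),
    pos_root p -> Aentry V i p -> (forall k : 'I_n, k != i -> ~~ Aentry V k p) ->
    pos_root q -> Aentry V i q -> (forall k : 'I_n, k != i -> ~~ Aentry V k q) ->
    p = q.
Proof.
move=> [_ _ spanV] i p q posp Aip privp posq _ privq.
have q12 : q.1 != q.2 by move: posq; rewrite /pos_root ltn_neqAle => /andP[].
apply: pos_root_endpoints_sub posp posq _; apply: root_kernel_sub_endpoints q12 _.
exact: private_roots_kernel_sub spanV Aip privp privq.
Qed.
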